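(* Let $H$ be a complex Hilbert space and let $\mathcal{U}\subseteq Sob(H)$ be a set of sub-observables all having the same outcome space $(\Omega,\mathcal{F})$, such that: (S1) there exists an observable $Z\in\mathcal{U}$; (S2) if $A\in\mathcal{U}$ then $A'=Z-A\in\mathcal{U}$; (S3) if $A,B\in\mathcal{U}$ and $A+B\in Sob(H)$, then $A+B\in\mathcal{U}$. For $A,B\in\mathcal{U}$ write $A\perp B$ if $A+B\in Sob(H)$, and in that case set $A\oplus B=A+B$. Then $(\mathcal{U},0,Z,\oplus)$ is an effect algebra (here $0$ denotes the zero sub-observable $\Delta\mapsto 0$).
   Context: $\mathcal{L}(H)$ is the set of bounded operators on $H$; $A\le B$ means $\langle\phi,A\phi\rangle\le\langle\phi,B\phi\rangle$ for all $\phi$. An effect is $a\in\mathcal{L}(H)$ with $0\le a\le I$; $\mathcal{E}(H)$ is the set of effects. For a measurable space $(\Omega,\mathcal{F})$, a sub-observable is a map $A:\mathcal{F}\to\mathcal{E}(H)$ that is countably additive in the strong operator topology; it is an observable if moreover $A(\Omega)=I$. $Sob(H)$ denotes the set of sub-observables; sums and differences of sub-observables with the same outcome space are taken pointwise ($(A+B)(\Delta)=A(\Delta)+B(\Delta)$). An effect algebra is a tuple $(E,0,1,\oplus)$ with $\oplus$ a partial binary operation (write $a\perp b$ when $a\oplus b$ is defined) such that: (E1) if $a\perp b$ then $b\perp a$ and $a\oplus b=b\oplus a$; (E2) if $a\perp b$ and $c\perp(a\oplus b)$ then $b\perp c$, $a\perp(b\oplus c)$ and $a\oplus(b\oplus c)=(a\oplus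 b)\oplus c$; (E3) for each $a\in E$ there is a unique $a'\in E$ with $a'\perp a$ and $a\oplus a'=1$; (E4) if $a\perp 1$ then $a=0$. *)

From mathcomp Require Import all_boot all_algebra complex.
From mathcomp Require Import all_classical reals measure.
Import GRing.Theory Num.Theory.
Local Open Scope ring_scope.
Local Open Scope classical_set_scope.

Section HilbertDefs.
Context {R : realType} {H : lmodType R[i]}.
(* inner product: conjugate-linear in the first, linear in the second argument *)
Variable ip : H -> H -> R[i].

Definition hnorm (x : H) : R := Num.sqrt (complex.Re (ip x x)).

Definition cauchy_seq (u : nat -> H) : Prop :=
  forall e : R, 0 < e -> exists N : nat, forall m n : nat,
    (N <= m)%N -> (N <= n)%N -> hnorm (u m - u n) < e.

Definition converges_to (u : nat -> H) (l : H) : Prop :=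
  forall e : R, 0 < e -> exists N : nat, forall n : nat,
    (N <= n)%N -> hnorm (u n - l) < e.

Definition is_complex_hilbert : Prop :=
  [/\ (forall (a : R[i]) (x y z : H), ip x (a *: y + z) = a * ip x y + ip x z),
      (forall x y : H, ip y x = conjc (ip x y)),
      (forall x : H, 0 <= ip x x),
      (forall x : H, ip x x = 0 -> x = 0)
    & (forall u : nat -> H, cauchy_seq u -> exists l : H, converges_to u l)].

Definition bounded_op (T : H -> H) : Prop :=
  (forall (a : R[i]) (x y : H), T (a *: x + y) = a *: T x + T y) /\
  exists C : R, forall x : H, hnorm (T x) <= C * hnorm x.

Definition op0 : H -> H := fun _ => 0.
Definition opI : H -> H := fun x => x.

(* A <= B iff <phi, A phi> <= <phi, B phi> for all phi (order of R[i]) *)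
Definition op_le (A B : H -> H) : Prop :=
  forall phi : H, ip phi (A phi) <= ip phi (B phi).

Definition is_effect (a : H -> H) : Prop :=
  bounded_op a /\ op_le op0 a /\ op_le a opI.

Section SubObs.
Context {d : measure_display} {Omega : measurableType d}.

(* A map F -> E(H) is represented as a total
   function on subsets of Omega that is normalised to 0 outside F. *)
Definition sub_observable (A : set Omega -> H -> H) : Prop :=
  [/\ (forall D : set Omega, measurable D -> is_effect (A D)),
      (forall D : set Omega, ~ measurable D -> A D = op0) &
  (forall F : nat -> set Omega, (forall n, measurable (F n)) ->
     trivIset setT F ->
     forall phi : H,
       converges_to (fun n => \sum_(k < n) A (F k) phi) (A (\bigcup_k F k) phi))].

Definition observable (A : set Omega -> H -> H) : Prop :=
  sub_observable A /\ A setT = opI.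

Definition sob_add (A B : set Omega -> H -> H) : set Omega -> H -> H :=
  fun D x => A D x + B D x.
Definition sob_sub (A B : set Omega -> H -> H) : set Omega -> H -> H :=
  fun D x => A D x - B D x.
Definition sob0 : set Omega -> H -> H := fun _ _ => 0.

End SubObs.
End HilbertDefs.

(* Effect algebra (E, zero, one, oplus) whose carrier is the set S of a type E;
   oplus is partial: it is meaningful exactly when perp holds. *)
Definition effect_algebra_on {E : Type} (S : set E) (zero one : E)
  (perp : E -> E -> Prop) (oplus : E -> E -> E) : Prop :=
  [/\ [/\ S zero, S one &
        (forall a b, S a -> S b -> perp a b -> S (oplus a b))],
      (forall a b, S a -> S b -> perp a b -> perp b a /\ oplus a b = oplus b a),
      (forall a b c, S a -> S b -> S c -> perp a b -> perp c (oplus a b) ->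
         [/\ perp b c, perp a (oplus b c) &
             oplus a (oplus b c) = oplus (oplus a b) c]),
      (forall a, S a -> exists a', [/\ S a', perp a' a, oplus a a' = one &
         forall b, S b -> perp b a -> oplus a b = one -> b = a'])
    &
      (forall a, S a -> perp a one -> a = zero)].

(* Orthogonal sums of sub-observables are pointwise sums, so E1-E3 are the
   laws of pointwise addition, with Z - A as the orthosupplement of A.  The
   analytic content is that being a sub-observable passes to a partial sum:
   B + C is dominated by A + B + C <= I (E2).  For E4, A + Z <= I at Omega
   forces <x, A(Omega) x> <= 0; finite additivity makes A monotone, so every
   A(D) has a vanishing quadratic form and is zero by polarization. *)

From mathcomp Require Import all_boot all_algebra complex.
From mathcomp Require Import all_classical reals measure.
From mathcomp Require Import ring lra.
Import GRing.Theory Num.Theory mathcomp.order.order.Order.TTheory.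
Set Implicit Arguments.
Unset Strict Implicit.
Unset Printing Implicit Defensive.
Local Open Scope ring_scope.
Local Open Scope classical_set_scope.
Local Open Scope complex_scope.

Definition is_inner_product {R : realType} {H : lmodType R[i]}
    (ip : H -> H -> R[i]) : Prop :=
  [/\ forall (a : R[i]) (x y z : H), ip x (a *: y + z) = a * ip x y + ip x z,
      forall x y : H, ip y x = (ip x y)^*,
      forall x : H, 0 <= ip x x
    & forall x : H, ip x x = 0 -> x = 0].

Lemma complex_hilbert_inner_product (R : realType) (H : lmodType R[i])
    (ip : H -> H -> R[i]) :
  is_complex_hilbert ip -> is_inner_product ip.
Proof. by case. Qed.

Section InnerProduct.
Variables (R : realType) (H : lmodType R[i]) (ip : H -> H -> R[i]).
Hypothesis ipP : is_inner_product ip.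

Lemma ipDr x y z : ip x (y + z) = ip x y + ip x z.
Proof.
by case: ipP => lin _ _ _; have := lin 1 x y z; rewrite scale1r mul1r.
Qed.

Lemma ip0r x : ip x 0 = 0.
Proof. by apply: (addrI (ip x 0)); rewrite -ipDr !addr0. Qed.

Lemma ipZr a x y : ip x (a *: y) = a * ip x y.
Proof. by case: ipP => lin _ _ _; rewrite -[a *: y]addr0 lin ip0r addr0. Qed.

Lemma ipNr x y : ip x (- y) = - ip x y.
Proof. by rewrite -scaleN1r ipZr mulN1r. Qed.

Lemma ipC x y : ip y x = (ip x y)^*.
Proof. by case: ipP. Qed.

Lemma ipDl x y z : ip (x + y) z = ip x z + ip y z.
Proof. by rewrite ipC ipDr rmorphD /= -!ipC. Qed.

Lemma ipZl a x y : ip (a *: x) y = a^* * ip x y.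
Proof. by rewrite ipC ipZr rmorphM /= -ipC. Qed.

Lemma ipNl x y : ip (- x) y = - ip x y.
Proof. by rewrite ipC ipNr rmorphN /= -ipC. Qed.

Lemma ip0l x : ip 0 x = 0.
Proof. by rewrite ipC ip0r rmorph0. Qed.

Lemma ipxx x : ip x x = (hnorm ip x ^+ 2)%:C.
Proof.
case: ipP => _ _ ip_ge0 _; have := ip_ge0 x; rewrite lecE => /andP[_ Re_ge0].
by rewrite sqr_sqrtr //; apply/esym/RRe_real/ger0_real.
Qed.

Lemma hnorm_ge0 x : 0 <= hnorm ip x.
Proof. exact: sqrtr_ge0. Qed.

Lemma hnorm_eq0 x : hnorm ip x = 0 -> x = 0.
Proof.
by case: ipP => _ _ _ ip_eq0 hx0; apply: ip_eq0; rewrite ipxx hx0 expr0n.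
Qed.

Lemma hnormN x : hnorm ip (- x) = hnorm ip x.
Proof. by rewrite /hnorm ipNl ipNr opprK. Qed.

Lemma hnorm_sqr_lincomb (s t : R) x y :
  hnorm ip (s%:C *: x + t%:C *: y) ^+ 2 =
  s ^+ 2 * hnorm ip x ^+ 2 + 2 * s * t * complex.Re (ip x y)
  + t ^+ 2 * hnorm ip y ^+ 2.
Proof.
apply: complexI; rewrite -ipxx ipDl !ipDr !ipZl !ipZr !ipxx (ipC x y).
move: (ip x y) => [a b]; simpc; apply/eqP; rewrite eq_complex /=.
by apply/andP; split; apply/eqP; ring.
Qed.

Lemma Re_ip_le_hnorm x y : complex.Re (ip x y) <= hnorm ip x * hnorm ip y.
Proof.
have [x0|hx0] := eqVneq (hnorm ip x) 0.
  by rewrite x0 mul0r (hnorm_eq0 x0) ip0l.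
have [y0|hy0] := eqVneq (hnorm ip y) 0.
  by rewrite y0 mulr0 (hnorm_eq0 y0) ip0r.
have hxy : 0 < hnorm ip x * hnorm ip y.
  by rewrite mulr_gt0 // lt0r ?hx0 ?hy0 hnorm_ge0.
have := sqr_ge0 (hnorm ip ((hnorm ip y)%:C *: x + (- hnorm ip x)%:C *: y)).
rewrite hnorm_sqr_lincomb; nra.
Qed.

Lemma hnormD x y : hnorm ip (x + y) <= hnorm ip x + hnorm ip y.
Proof.
rewrite -(@ler_pXn2r _ 2) ?nnegrE ?addr_ge0 ?hnorm_ge0 //.
have := hnorm_sqr_lincomb 1 1 x y; rewrite !scale1r => ->.
have := Re_ip_le_hnorm x y; lra.
Qed.

Lemma hnorm_small_eq0 x : (forall e, 0 < e -> hnorm ip x < e) -> x = 0.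
Proof.
move=> small; apply: hnorm_eq0; apply/le_anti; rewrite hnorm_ge0 andbT.
by apply/ler_addgt0Pr => e /small/ltW; rewrite add0r.
Qed.

Lemma converges_toD u v l m : converges_to ip u l -> converges_to ip v m ->
  converges_to ip (fun n => u n + v n) (l + m).
Proof.
move=> ul vm e e0; have e2 : 0 < e / 2 by rewrite divr_gt0.
have [N1 uN1] := ul _ e2; have [N2 vN2] := vm _ e2.
exists (maxn N1 N2) => n; rewrite geq_max => /andP[n1 n2].
rewrite opprD addrACA (le_lt_trans (hnormD _ _)) //.
by rewrite [e]splitr ltrD ?uN1 ?vN2.
Qed.

Lemma converges_to_eventually_cst u l c N : converges_to ip u l ->
  (forall n, (N <= n)%N -> u n = c) -> l = c.
Proof.
move=> ul uc; apply/esym/subr0_eq/hnorm_small_eq0 => e /ul[M uM].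
by rewrite -(uc (maxn N M)) ?leq_maxl // uM ?leq_maxr.
Qed.

Lemma converges_to_natmul_eq0 v l :
  converges_to ip (fun n => v *+ n) l -> v = 0.
Proof.
move=> vl; apply: hnorm_small_eq0 => e e0.
have e2 : 0 < e / 2 by rewrite divr_gt0.
have [N vN] := vl _ e2.
have -> : v = (v *+ N.+1 - l) - (v *+ N - l).
  by rewrite opprB addrA subrK mulrSr addrAC subrr add0r.
by rewrite (le_lt_trans (hnormD _ _)) // hnormN [e]splitr ltrD ?vN.
Qed.

Lemma linear_quad_form_eq0 (T : H -> H) :
  (forall a x y, T (a *: x + y) = a *: T x + T y) ->
  (forall x, ip x (T x) = 0) -> T = op0.
Proof.
move=> lin quad0; apply: funext => y.
have TD u v : T (u + v) = T u + T v by rewrite -[u]scale1r lin !scale1r.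
have T0 : T 0 = 0 by apply: (addrI (T 0)); rewrite -TD !addr0.
have TZ a u : T (a *: u) = a *: T u by rewrite -[a *: u]addr0 lin T0 !addr0.
have quad_sym u v : ip u (T v) + ip v (T u) = 0.
  by have := quad0 (u + v); rewrite TD !ipDl !ipDr !quad0 add0r addr0.
set p := ip (T y) (T y); set s := ip y (T (T y)).
have s_eq : s = - p by apply/eqP; rewrite -addr_eq0 addrC quad_sym.
have : - 'i%C * p + 'i%C * s = 0.
  have ipiZl u v : ip ('i%C *: u) v = - 'i%C * ip u v.
    by rewrite ipZl; congr (_ * _); apply/eqP; rewrite eq_complex /= oppr0 !eqxx.
  by have := quad_sym ('i%C *: T y) y; rewrite ipiZl TZ ipZr.
rewrite s_eq mulrN mulNr -opprD => /eqP.
rewrite oppr_eq0 -mulr2n mulrn_eq0 mulf_eq0 /=.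
case/orP => [/eqP/(congr1 (@complex.Im R))/eqP|]; first by rewrite oner_eq0.
by case: ipP => _ _ _ ip_eq0 /eqP /ip_eq0.
Qed.

Lemma bounded_opD (A B : H -> H) : bounded_op ip A -> bounded_op ip B ->
  bounded_op ip (fun x => A x + B x).
Proof.
move=> [linA [CA hA]] [linB [CB hB]]; split.
  by move=> a x y; rewrite linA linB scalerDr addrACA.
by exists (CA + CB) => x; rewrite mulrDl (le_trans (hnormD _ _)) ?lerD.
Qed.

Lemma effect_ge0 (a : H -> H) x : is_effect ip a -> 0 <= ip x (a x).
Proof. by move=> [_ [a_ge0 _]]; have := a_ge0 x; rewrite /op0 ip0r. Qed.

Lemma is_effectD (a b : H -> H) : is_effect ip a -> is_effect ip b ->
  op_le ip (fun x => a x + b x) opI -> is_effect ip (fun x => a x + b x).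
Proof.
move=> ea eb abI; split; first by case: ea eb => ? _ [? _]; apply: bounded_opD.
by split=> // x; rewrite /op0 ip0r ipDr addr_ge0 ?effect_ge0.
Qed.

Section SubObservable.
Variables (d : measure_display) (Omega : measurableType d).
Implicit Types (A B C : set Omega -> H -> H) (D E : set Omega).

(* Functions into a zmodType form a zmodType, and [sob_add], [sob_sub] are
   convertible to its operations. *)
Lemma sob_addC A B : sob_add A B = sob_add B A.
Proof. exact: addrC. Qed.

Lemma sob_addA A B C : sob_add A (sob_add B C) = sob_add (sob_add A B) C.
Proof. exact: addrA. Qed.

Lemma sob_subK A B : sob_add (sob_sub A B) B = A.
Proof. exact: subrK. Qed.

Lemma sob_addKl A B : sob_sub (sob_add A B) A = B.
Proof. by rewrite sob_addC; exact: addrK. Qed.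

Lemma sob_subrr A : sob_sub A A = sob0.
Proof. exact: subrr. Qed.

Lemma sub_observableD A B : sub_observable ip A -> sub_observable ip B ->
  (forall D, measurable D -> op_le ip (sob_add A B D) opI) ->
  sub_observable ip (sob_add A B).
Proof.
move=> [effA nmA addA] [effB nmB addB] leI; split.
- by move=> D mD; apply: is_effectD; [exact: effA | exact: effB | exact: leI].
- move=> D nmD; rewrite /sob_add nmA // nmB //.
  by apply: funext => x; rewrite addr0.
- move=> F mF tF x; rewrite /sob_add; under eq_fun do rewrite big_split.
  exact: converges_toD (addA F mF tF x) (addB F mF tF x).
Qed.

Lemma sub_observable_set0 A : sub_observable ip A -> A set0 = op0.
Proof.
move=> [_ _ addA]; apply: funext => x.
have := addA _ (fun=> measurable0) (@trivIset_set0 _ _ setT) x.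
rewrite bigcup0 //; under eq_fun do rewrite sumr_const card_ord.
exact: converges_to_natmul_eq0.
Qed.

Lemma sub_observable_setU A D E : sub_observable ip A ->
  measurable D -> measurable E -> D `&` E = set0 ->
  A (D `|` E) = fun x => A D x + A E x.
Proof.
move=> sobA mD mE DE0; have [_ _ addA] := sobA; apply: funext => x.
have mDE n : measurable (bigcup2 D E n).
  by rewrite /=; case: ifP => // _; case: ifP.
have := addA _ mDE _ x; rewrite bigcup2E -trivIset_bigcup2 => /(_ DE0).
move/(converges_to_eventually_cst (N := 2)); apply=> -[|[|n]] // _.
rewrite 2!big_ord_recl big1 ?addr0 // => k _.
by rewrite /= sub_observable_set0.
Qed.

Lemma sub_observable_le A D E : sub_observable ip A ->
  measurable D -> measurable E -> D `<=` E -> op_le ip (A D) (A E).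
Proof.
move=> sobA mD mE DE x; have [effA _ _] := sobA.
rewrite -(setDUK DE) sub_observable_setU ?setDIK //; last exact: measurableD.
by rewrite ipDr lerDl (effect_ge0 _ (effA _ (measurableD mE mD))).
Qed.

Lemma sub_observable_add_dropl A B C : sub_observable ip A ->
  sub_observable ip B -> sub_observable ip C ->
  sub_observable ip (sob_add A (sob_add B C)) ->
  sub_observable ip (sob_add B C).
Proof.
move=> [effA _ _] sobB sobC [effABC _ _]; apply: sub_observableD => // D mD x.
have [_ [_ leI]] := effABC D mD; apply: le_trans (leI x).
by rewrite [X in _ <= X]ipDr lerDr (effect_ge0 _ (effA _ mD)).
Qed.

Lemma sub_observable_add_observable_eq0 A Z : sub_observable ip A ->
  observable ip Z -> sub_observable ip (sob_add A Z) -> A = sob0.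
Proof.
move=> sobA [_ ZT] [effAZ _ _]; have [effA nmA _] := sobA.
have AT_le0 x : ip x (A setT x) <= 0.
  have [_ [_ /(_ x)]] := effAZ setT measurableT.
  by rewrite /sob_add ZT /opI ipDr gerDr.
apply: funext => D; have [mD|/nmA-> //] := pselect (measurable D).
apply: linear_quad_form_eq0; first by have [[]] := effA D mD.
move=> x; apply/le_anti/andP; split; last exact: effect_ge0 (effA D mD).
apply: le_trans (AT_le0 x).
exact: sub_observable_le sobA mD measurableT (@subsetT _ D) x.
Qed.

End SubObservable.

End InnerProduct.

Theorem theorem3p1 (R : realType) (H : lmodType R[i]) (ip : H -> H -> R[i])
  (hH : is_complex_hilbert ip)
  (d : measure_display) (Omega : measurableType d)
  (U : set (set Omega -> H -> H))
  (hU : forall A, U A -> sub_observable ip A)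
  (Z : set Omega -> H -> H)
  (S1 : U Z /\ observable ip Z)
  (S2 : forall A, U A -> U (sob_sub Z A))
  (S3 : forall A B, U A -> U B -> sub_observable ip (sob_add A B) -> U (sob_add A B)) :
  effect_algebra_on U sob0 Z
    (fun A B => sub_observable ip (sob_add A B)) (@sob_add R H d Omega).
Proof.
have ipP := complex_hilbert_inner_product hH.
have [UZ obsZ] := S1.
have U0 : U sob0 by rewrite -(sob_subrr Z); exact: S2.
split.
- by split.
- by move=> A B _ _; rewrite sob_addC.
- move=> A B C UA UB UC _ perpA_BC; rewrite sob_addC -sob_addA in perpA_BC.
  split=> //; last exact: sob_addA.
  exact (sub_observable_add_dropl ipP (hU A UA) (hU B UB) (hU C UC) perpA_BC).
- move=> A UA; exists (sob_sub Z A); split.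
  + exact: S2.
  + by rewrite sob_subK; case: obsZ.
  + by rewrite sob_addC sob_subK.
  + by move=> B _ _ <-; rewrite sob_addKl.
- move=> A UA perpAZ.
  exact (sub_observable_add_observable_eq0 ipP (hU A UA) obsZ perpAZ).
Qed.
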